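(* Let $\gamma:[0,1]\to\mathbb{R}^2$ be a $C^1$ curve of constant speed $c>0$ with $\gamma(0)\neq\gamma(1)$, whose turning angle function $\theta$ satisfies $\theta(1)-\theta(0)=2\pi m$ with $0\neq m\in\mathbb{Z}$. Let $k\ge 2$ and $z_h\in Z_k$. Then there are no cuts $C\in D_k$ such that $r_{z_h,C}$ is closed, i.e. $r_{z_h,C}(0)\neq r_{z_h,C}(1)$ for all $C\in D_k$.
   Context: A turning angle function is a continuous $\theta$ with $\gamma'(s)=c(\cos\theta(s),\sin\theta(s))$. Concatenation $\alpha*\beta$ of two $C^1$ planar curves of the same constant speed ($\alpha$ on $[a_1,b_1]$, $\beta$ on $[a_2,b_2]$) is the curve on $[0,(b_1-a_1)+(b_2-a_2)]$ equal to $\alpha(s+a_1)$ for $s\le b_1-a_1$ and to $T(\beta(s-(b_1-a_1)+a_2))$ afterwards, where $T$ is the orientation-preserving rigid motion sending $\beta(a_2)$ to $\alpha(b_1)$ and the unit tangent of $\beta$ at $a_2$ to that of $\alpha$ at $b_1$; it is associative. Let $D_k=\{(c_1,\dots,c_{k-1})\in[0,1]^{k-1}: 0\le c_1\le\dots\le c_{k-1}\le 1\}$; set $c_0=0$, $c_k=1$. For $C\in D_k$ let $\gamma_i$ be the restriction of $\gamma$ to $[c_{i-1},c_i]$ (a degenerate arc is a point carrying the tangent direction of $\gamma$ there). For $\sigma\in S_k$, $r_{\sigma,C}:=\gamma_{\sigma(1)}*\dots*\gamma_{\sigma(k)}$ parametrized over $[0,1]$. $Z_k=\{z_0,\dots,z_{k-1}\}$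 with $z_h(i)=i+h$ if $i\le k-h$ and $z_h(i)=i+h-k$ if $i>k-h$. *)

From Stdlib Require Import Reals List.
From Coquelicot Require Import Coquelicot.
Import ListNotations.
Open Scope R_scope.

Definition deriv_within01 (f : R -> R) (s l : R) : Prop :=
  limit1_in (fun h => (f (s + h) - f s) / h)
            (fun h => h <> 0 /\ 0 <= s + h <= 1) l 0.

Definition cont_within01 (f : R -> R) (x : R) : Prop :=
  limit1_in f (fun y => 0 <= y <= 1) (f x) x.

(* theta is a turning angle function of the constant-speed-c curve gamma on [0,1]:
   theta continuous and gamma'(s) = c (cos theta(s), sin theta(s)) on [0,1].
   (This makes gamma C^1 on [0,1] with constant speed c.) *)
Definition turning_angle (gamma : R -> C) (c : R) (theta : R -> R) : Prop :=
  (forall x, 0 <= x <= 1 -> cont_within01 theta x) /\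
  (forall s, 0 <= s <= 1 ->
     deriv_within01 (fun t => fst (gamma t)) s (c * cos (theta s)) /\
     deriv_within01 (fun t => snd (gamma t)) s (c * sin (theta s))).

Definition unitC (t : R) : C := (cos t, sin t).

(* A curve piece: parameter interval [0, plen], map pf, unit tangent at the start
   (ptan0) and at the end (ptan1).  Degenerate pieces (plen = 0) carry tangents. *)
Record piece := Piece { plen : R; pf : R -> C; ptan0 : C; ptan1 : C }.

(* Concatenation alpha * beta: beta is moved by the orientation-preserving rigid motion
   T x = alpha(end) + (u1/v0) (x - beta(start)), sending beta(start) to alpha(end) and
   the (unit) start tangent v0 of beta to the (unit) end tangent u1 of alpha. *)
Definition concat (a b : piece) : piece :=
  let rot := Cdiv (ptan1 a) (ptan0 b) in
  Piece (plen a + plen b)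
        (fun s => if Rle_dec s (plen a) then pf a s
                  else Cplus (pf a (plen a))
                             (Cmult rot (Cminus (pf b (s - plen a)) (pf b 0))))
        (ptan0 a)
        (Cmult rot (ptan1 b)).

(* gamma_i : restriction of gamma to [cut (i-1), cut i] (i is 1-based),
   shifted to start at parameter 0. *)
Definition arc (gamma : R -> C) (theta : R -> R) (cut : nat -> R) (i : nat) : piece :=
  Piece (cut i - cut (i - 1)%nat)
        (fun s => gamma (s + cut (i - 1)%nat))
        (unitC (theta (cut (i - 1)%nat)))
        (unitC (theta (cut i))).

(* r_{sigma,C} = gamma_{sigma 1} * ... * gamma_{sigma k} (concatenation is associative;
   we bracket to the left), reparametrized linearly over [0,1]. *)
Definition r_piece (gamma : R -> C) (theta : R -> R) (cut : nat -> R)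
    (k : nat) (sigma : nat -> nat) : piece :=
  fold_left concat (map (fun i => arc gamma theta cut (sigma i)) (seq 2 (k - 1)))
            (arc gamma theta cut (sigma 1%nat)).

Definition r_curve (gamma : R -> C) (theta : R -> R) (cut : nat -> R)
    (k : nat) (sigma : nat -> nat) : R -> C :=
  let p := r_piece gamma theta cut k sigma in fun s => pf p (plen p * s).

Definition zshift (k h : nat) (i : nat) : nat :=
  if (i <=? k - h)%nat then (i + h)%nat else (i + h - k)%nat.

Definition in_Dk (k : nat) (cut : nat -> R) : Prop :=
  cut 0%nat = 0 /\ cut k = 1 /\ (forall i, (i < k)%nat -> cut i <= cut (S i)).

(* Concatenating a piece whose end tangent equals the start tangent of the next
   piece involves no rotation, so displacements simply add.  In the cyclic order
   z_h the arcs follow each other with matching tangents, also across the wrap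
   from gamma_k to gamma_1 because theta(1) and theta(0) differ by a multiple of
   2 pi.  Hence r_{z_h,C}(1) - r_{z_h,C}(0) telescopes to gamma(1) - gamma(0),
   which is nonzero. *)

From Pilot Require Import Defs.
From Stdlib Require Import Reals ZArith Lia Lra List.
From Coquelicot Require Import Coquelicot.
Open Scope R_scope.

Lemma unitC_neq0 (t : R) : unitC t <> 0%C.
Proof.
  intros E; injection E as Ecos Esin.
  exact (cos_sin_0 t (conj Ecos Esin)).
Qed.

Lemma unitC_add_2PI_INR (x : R) (n : nat) : unitC (x + 2 * PI * INR n) = unitC x.
Proof.
  unfold unitC; rewrite (Rmult_comm (2 * PI)), <- Rmult_assoc, (Rmult_comm (INR n)).
  now rewrite cos_period, sin_period.
Qed.

Lemma unitC_add_2PI_IZR (x : R) (m : Z) : unitC (x + 2 * PI * IZR m) = unitC x.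
Proof.
  destruct m as [|p|p].
  - now rewrite Rmult_0_r, Rplus_0_r.
  - rewrite <- (positive_nat_Z p), <- INR_IZR_INZ.
    apply unitC_add_2PI_INR.
  - rewrite <- Pos2Z.opp_pos, opp_IZR, <- (positive_nat_Z p), <- INR_IZR_INZ.
    rewrite <- (unitC_add_2PI_INR (x + 2 * PI * - INR (Pos.to_nat p)) (Pos.to_nat p)).
    f_equal; ring.
Qed.

Definition pdisp (p : piece) : C := Cminus (pf p (plen p)) (pf p 0).

Lemma pdisp_concat (a b : piece) :
  0 <= plen a -> 0 <= plen b -> ptan1 a = ptan0 b -> ptan0 b <> 0%C ->
  pdisp (Defs.concat a b) = Cplus (pdisp a) (pdisp b).
Proof.
  intros Ha Hb Hab Hb0.
  unfold pdisp, Defs.concat; simpl.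
  assert (Hrot : Cdiv (ptan1 a) (ptan0 b) = 1%C) by (rewrite Hab; now apply Cinv_r).
  rewrite Hrot.
  destruct (Rle_dec 0 (plen a)) as [_|]; [|lra].
  destruct (Rle_dec (plen a + plen b) (plen a)) as [Hle|_].
  - assert (Eb : plen b = 0) by lra.
    rewrite Eb, Rplus_0_r; ring.
  - replace (plen a + plen b - plen a) with (plen b) by ring; ring.
Qed.

Lemma ptan1_concat (a b : piece) :
  ptan1 a = ptan0 b -> ptan0 b <> 0%C -> ptan1 (Defs.concat a b) = ptan1 b.
Proof.
  intros Hab Hb0; simpl.
  rewrite Hab; unfold Cdiv; rewrite Cinv_r by exact Hb0.
  apply Cmult_1_l.
Qed.

Lemma map_seq_add {A : Type} (f : nat -> A) (s d n : nat) :
  map f (seq (s + d) n) = map (fun i => f (i + d)%nat) (seq s n).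
Proof.
  revert s; induction n as [|n IH]; intros s; simpl; [reflexivity|].
  now rewrite <- IH.
Qed.

Lemma zshift_1 (k h : nat) : (h < k)%nat -> zshift k h 1 = S h.
Proof.
  intros Hh; unfold zshift.
  replace (1 <=? k - h)%nat with true by (symmetry; apply Nat.leb_le; lia).
  lia.
Qed.

Lemma map_zshift_seq {A : Type} (f : nat -> A) (k h : nat) :
  (h < k)%nat ->
  map (fun i => f (zshift k h i)) (seq 2 (k - 1)) =
  map f (seq (S (S h)) (k - h - 1)) ++ map f (seq 1 h).
Proof.
  intros Hh.
  replace (k - 1)%nat with (k - h - 1 + h)%nat by lia.
  rewrite seq_app, map_app.
  replace (S (S h)) with (2 + h)%nat by lia.
  replace (2 + (k - h - 1))%nat with (1 + (k - h))%nat by lia.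
  rewrite !map_seq_add.
  f_equal; apply map_ext_in; intros i Hi; apply in_seq in Hi; unfold zshift.
  - replace (i <=? k - h)%nat with true by (symmetry; apply Nat.leb_le; lia).
    reflexivity.
  - replace (i + (k - h) <=? k - h)%nat with false by (symmetry; apply Nat.leb_gt; lia).
    f_equal; lia.
Qed.

Section ArcChain.

Variables (gamma : R -> C) (theta : R -> R) (cut : nat -> R) (k : nat).
Hypothesis cut_mono : forall i, (i < k)%nat -> cut i <= cut (S i).

Local Notation arc_ := (arc gamma theta cut).

Lemma arc_succ (j : nat) :
  arc_ (S j) = Piece (cut (S j) - cut j) (fun s => gamma (s + cut j))
                     (unitC (theta (cut j))) (unitC (theta (cut (S j)))).
Proof. unfold arc; simpl; now rewrite Nat.sub_0_r. Qed.

Lemma plen_arc_ge0 (j : nat) : (j < k)%nat -> 0 <= plen (arc_ (S j)).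
Proof. intros Hj; rewrite arc_succ; simpl; pose proof (cut_mono j Hj); lra. Qed.

Lemma pdisp_arc (j : nat) :
  pdisp (arc_ (S j)) = Cminus (gamma (cut (S j))) (gamma (cut j)).
Proof.
  rewrite arc_succ; unfold pdisp; simpl.
  now replace (cut (S j) - cut j + cut j) with (cut (S j)) by ring; rewrite Rplus_0_l.
Qed.

Lemma fold_concat_arcs (n j : nat) (p : piece) :
  (j + n <= k)%nat -> 0 <= plen p -> ptan1 p = unitC (theta (cut j)) ->
  let q := fold_left Defs.concat (map arc_ (seq (S j) n)) p in
  0 <= plen q /\
  pdisp q = Cplus (pdisp p) (Cminus (gamma (cut (j + n))) (gamma (cut j))) /\
  ptan1 q = unitC (theta (cut (j + n))).
Proof.
  revert j p; induction n as [|n IH]; intros j p Hjn Hp Htan; simpl.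
  - rewrite Nat.add_0_r; repeat split; [exact Hp | ring | exact Htan].
  - assert (Hjoin : ptan1 p = ptan0 (arc_ (S j))) by now rewrite arc_succ.
    assert (Hstart : ptan0 (arc_ (S j)) <> 0%C) by (rewrite arc_succ; apply unitC_neq0).
    assert (Hlen : 0 <= plen (arc_ (S j))) by (apply plen_arc_ge0; lia).
    destruct (IH (S j) (Defs.concat p (arc_ (S j)))) as (Hq & Hdisp & Htan');
      [lia | exact (Rplus_le_le_0_compat _ _ Hp Hlen) | now rewrite ptan1_concat, arc_succ |].
    replace (j + S n)%nat with (S j + n)%nat by lia.
    split; [exact Hq|]; split; [|exact Htan'].
    rewrite Hdisp, pdisp_concat, pdisp_arc by assumption; ring.
Qed.

End ArcChain.

Lemma r_curve_1_sub_0 (gamma : R -> C) (theta : R -> R) (cut : nat -> R)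
    (k : nat) (sigma : nat -> nat) :
  Cminus (r_curve gamma theta cut k sigma 1) (r_curve gamma theta cut k sigma 0) =
  pdisp (r_piece gamma theta cut k sigma).
Proof. unfold r_curve, pdisp; now rewrite Rmult_1_r, Rmult_0_r. Qed.

Lemma pdisp_r_piece_zshift (gamma : R -> C) (theta : R -> R) (m : Z)
    (k h : nat) (cut : nat -> R) :
  theta 1 - theta 0 = 2 * PI * IZR m -> (h < k)%nat -> in_Dk k cut ->
  pdisp (r_piece gamma theta cut k (zshift k h)) = Cminus (gamma 1) (gamma 0).
Proof.
  intros Hwind Hh (Hcut0 & Hcutk & Hmono).
  unfold r_piece; rewrite zshift_1, (map_zshift_seq (arc gamma theta cut)), fold_left_app
    by exact Hh.
  destruct (fold_concat_arcs gamma theta cut k Hmono (k - h - 1) (S h)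
              (arc gamma theta cut (S h))) as (Hlen & Hdisp & Htan);
    [lia | exact (plen_arc_ge0 gamma theta cut k Hmono h Hh) | now rewrite arc_succ |].
  replace (S h + (k - h - 1))%nat with k in Hdisp, Htan by lia.
  assert (Hwrap : unitC (theta (cut k)) = unitC (theta (cut 0%nat))).
  { rewrite Hcutk, Hcut0, <- (unitC_add_2PI_IZR (theta 0) m); f_equal; lra. }
  rewrite Hwrap in Htan.
  destruct (fold_concat_arcs gamma theta cut k Hmono h 0 _ ltac:(lia) Hlen Htan)
    as (_ & Hdisp' & _).
  rewrite Hdisp', Hdisp, pdisp_arc, Nat.add_0_l, Hcut0, Hcutk; ring.
Qed.

Theorem lemma4p2 (gamma : R -> C) (c : R) (theta : R -> R) (m : Z) (k h : nat) :
  0 < c ->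
  turning_angle gamma c theta ->
  gamma 0 <> gamma 1 ->
  theta 1 - theta 0 = 2 * PI * IZR m ->
  m <> 0%Z ->
  (2 <= k)%nat ->
  (h < k)%nat ->
  forall cut : nat -> R, in_Dk k cut ->
    r_curve gamma theta cut k (zshift k h) 0 <> r_curve gamma theta cut k (zshift k h) 1.
Proof.
  intros _ _ Hopen Hwind _ _ Hh cut Hcut Hclosed.
  apply Hopen.
  pose proof (r_curve_1_sub_0 gamma theta cut k (zshift k h)) as Hchord.
  rewrite Hclosed, (pdisp_r_piece_zshift gamma theta m k h cut Hwind Hh Hcut) in Hchord.
  replace (gamma 1) with (Cplus (gamma 0) (Cminus (gamma 1) (gamma 0))) by ring.
  rewrite <- Hchord; ring.
Qed.
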